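(* Let $F$ be a graph with chromatic number $3$ that has a color-critical edge. Then there exists $n_0$ such that for every $n\ge n_0$, \[\mathrm{ex}(n,P_3,F)=\mathcal{N}(P_3,T_2(n)).\] In other words, $P_3$ is $F$-Tur\'an-good.
   Context: For graphs $H$ and $G$, $\mathcal{N}(H,G)$ denotes the number of (not necessarily induced) subgraphs of $G$ isomorphic to $H$. For graphs $H,F$, $\mathrm{ex}(n,H,F)$ is the maximum of $\mathcal{N}(H,G)$ over all $F$-free graphs $G$ on $n$ vertices. $P_3$ is the path on $3$ vertices (two edges). $T_r(n)$ is the Tur\'an graph: the complete $r$-partite graph on $n$ vertices whose part sizes are $\lfloor n/r\rfloor$ or $\lceil n/r\rceil$. An edge $e$ of $F$ is color-critical if deleting $e$ decreases the chromatic number of $F$. If $F$ is $k$-chromatic and $H$ does not contain $F$, $H$ is called $F$-Tur\'an-good if $\mathrm{ex}(n,H,F)=\mathcal{N}(H,T_{k-1}(n))$ for all sufficiently large $n$. *)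

From mathcomp Require Import all_boot.
Set Implicit Arguments.
Unset Strict Implicit.
Unset Printing Implicit Defensive.



Definition simple_graph (V : finType) (G : rel V) : Prop :=
  symmetric G /\ irreflexive G.

Definition edges (V : finType) (G : rel V) : {set {set V}} :=
  [set e : {set V} | [exists x, exists y, G x y && (e == [set x; y])]].

(* a (not necessarily induced) subgraph (S, E) of G *)
Definition is_subgraph (V : finType) (G : rel V)
    (p : {set V} * {set {set V}}) : bool :=
  (p.2 \subset edges G) && [forall e in p.2, e \subset p.1].

Definition iso_to (W V : finType) (H : rel W)
    (p : {set V} * {set {set V}}) : bool :=
  [exists f : {ffun W -> V},
     injectiveb f && (f @: [set: W] == p.1) &&
     [forall x, forall y, H x y == ([set f x; f y] \in p.2)]].

Definition Ncount (W V : finType) (H : rel W) (G : rel V) : nat :=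
  #|[set p : {set V} * {set {set V}} | is_subgraph G p && iso_to H p]|.

Definition colorable (V : finType) (G : rel V) (k : nat) : bool :=
  [exists c : {ffun V -> 'I_k}, [forall x, forall y, G x y ==> (c x != c y)]].

Definition chromatic_number (V : finType) (G : rel V) : nat :=
  \big[minn/#|V|]_(k < #|V|.+1 | colorable G k) k.

Definition delete_edge (V : finType) (G : rel V) (x y : V) : rel V :=
  fun u v => G u v && ([set u; v] != [set x; y]).

Definition color_critical_edge (V : finType) (F : rel V) (x y : V) : Prop :=
  F x y /\ chromatic_number (delete_edge F x y) < chromatic_number F.

Definition grel (n : nat) (g : {ffun 'I_n * 'I_n -> bool}) : rel 'I_n :=
  fun x y => g (x, y).

Definition simpleb (n : nat) (g : {ffun 'I_n * 'I_n -> bool}) : bool :=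
  [forall x, forall y, g (x, y) == g (y, x)] && [forall x, ~~ g (x, x)].

Definition ex (n : nat) (W U : finType) (H : rel W) (F : rel U) : nat :=
  \max_(g : {ffun 'I_n * 'I_n -> bool} |
          simpleb g && (Ncount F (grel g) == 0)) Ncount H (grel g).

Definition P3 : rel 'I_3 := fun i j => (i.+1 == j :> nat) || (j.+1 == i :> nat).

Definition turan2 (n : nat) : rel 'I_n :=
  fun i j => (i < n./2) != (j < n./2).

Arguments turan2 n : clear implicits.
Arguments ex n {W U} H F.

(* Deleting the colour-critical edge xy leaves F bipartite with x and y on the
   same side, so F embeds into every graph containing an edge uv, a set B of |F|
   common neighbours of u and v, and |F| - 2 further vertices joined to all of B.
   In an F-free graph on m vertices with minimum degree at least m/4, a greedy
   choice of large common neighbourhoods therefore bounds all codegrees by a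
   constant.  A vertex w of maximum degree then splits the vertices into N(w) and
   its complement so that every vertex of one part has degree at most the size of
   the other; hence there are at most as many P3's as in a complete bipartite
   graph, and so at most as many as in T_2(m).  An arbitrary F-free graph is
   reduced to this case by progressive induction: delete a vertex lying on fewer
   than p3(T_2(m)) - p3(T_2(m-1)) copies of P3 as long as there is one.  Each
   deletion raises the excess of the P3 count over the Turan count by one, and
   the excess is bounded on graphs of a fixed size, so for large m the process
   ends at a graph where no such vertex exists, which has minimum degree m/4. *)

From Pilot Require Import Defs.
From mathcomp Require Import all_boot zify.
Set Implicit Arguments.
Unset Strict Implicit.
Unset Printing Implicit Defensive.

Lemma bigmin_leq_cond (I : finType) (P : pred I) (F : I -> nat) idx i0 :
  P i0 -> \big[minn/idx]_(i | P i) F i <= F i0.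
Proof.
move=> Pi0; rewrite -big_filter.
have: i0 \in [seq i <- index_enum I | P i] by rewrite mem_filter Pi0 mem_index_enum.
elim: [seq _ <- _ | _] => [//|j r IHr]; rewrite big_cons inE => /orP[/eqP<-|/IHr].
  exact: geq_minl.
exact: leq_trans (geq_minr _ _).
Qed.

Lemma bigmin_leq_idx (I : finType) (P : pred I) (F : I -> nat) idx :
  \big[minn/idx]_(i | P i) F i <= idx.
Proof. by elim/big_rec: _ => // i x _; apply: leq_trans (geq_minr _ _). Qed.

Section Colouring.
Variables (V : finType) (G : rel V).

Lemma colorable_widen k k' : k <= k' -> colorable G k -> colorable G k'.
Proof.
move=> le_kk' /existsP[c /forallP proper_c]; apply/existsP.
exists [ffun z => widen_ord le_kk' (c z)]; apply/forallP => a; apply/forallP => b.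
apply/implyP => Gab; rewrite !ffunE; move/forallP/(_ b)/implyP/(_ Gab): (proper_c a).
by apply: contra => /eqP [] /val_inj ->.
Qed.

Lemma colorable_card : irreflexive G -> colorable G #|V|.
Proof.
move=> Girr; apply/existsP; exists [ffun z => enum_rank z].
apply/forallP => a; apply/forallP => b; apply/implyP => Gab; rewrite !ffunE.
by apply: contraTneq Gab => /enum_rank_inj ->; rewrite Girr.
Qed.

Lemma chromatic_number_min k : colorable G k -> chromatic_number G <= k.
Proof.
move=> colk; rewrite /chromatic_number; case: (ltnP k #|V|.+1) => [ltk | /ltnW geq_k].
  exact: (@bigmin_leq_cond _ (fun i : 'I_#|V|.+1 => colorable G i) val _ (Ordinal ltk)).
exact: leq_trans (bigmin_leq_idx _ _ _) geq_k.
Qed.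

Lemma colorable_chromatic_number : irreflexive G -> colorable G (chromatic_number G).
Proof.
move=> Girr; rewrite /chromatic_number.
elim/big_ind: _ => //; first exact: colorable_card.
by move=> k k' colk colk'; rewrite /minn; case: ifP.
Qed.

Lemma colorable2P :
  reflect (exists c : V -> bool, forall a b, G a b -> c a != c b) (colorable G 2).
Proof.
apply: (iffP existsP) => [[col /forallP proper_col]|[c proper_c]].
  exists (fun a => val (col a) == 0) => a b /(implyP (forallP (proper_col a) b)).
  by case: (col a) (col b) => -[|[|//]] ? [[|[|//]] ?].
exists [ffun a => @Ordinal 2 (c a) (leq_b1 _)]; apply/forallP=> a; apply/forallP=> b.
by apply/implyP=> /proper_c; rewrite !ffunE; case: (c a); case: (c b).
Qed.

End Colouring.

Lemma eq_set2 (T : finType) (a b c d : T) :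
  [set a; b] = [set c; d] -> (a = c /\ b = d) \/ (a = d /\ b = c).
Proof.
move=> eq_ab_cd.
have: a \in [set c; d] by rewrite -eq_ab_cd set21.
have: b \in [set c; d] by rewrite -eq_ab_cd set22.
have: c \in [set a; b] by rewrite eq_ab_cd set21.
have: d \in [set a; b] by rewrite eq_ab_cd set22.
by rewrite !in_set2 => /orP[]/eqP-> /orP[]/eqP-> /orP[]/eqP ? /orP[]/eqP ?; subst; tauto.
Qed.

Lemma imset_set2 (T T' : finType) (f : T -> T') a b : f @: [set a; b] = [set f a; f b].
Proof. by rewrite imsetU1 imset_set1. Qed.

Lemma edgesP (K : finType) (R : rel K) e :
  reflect (exists a b, R a b /\ e = [set a; b]) (e \in edges R).
Proof.
rewrite inE; apply: (iffP existsP) => [[a /existsP[b /andP[Rab /eqP->]]]|[a [b [Rab ->]]]].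
  by exists a, b.
by exists a; apply/existsP; exists b; rewrite Rab eqxx.
Qed.

Lemma mem_set2_edges (K : finType) (R : rel K) a b :
  symmetric R -> ([set a; b] \in edges R) = R a b.
Proof.
move=> Rsym; apply/edgesP/idP => [[c [d [Rcd /eq_set2[][-> ->]]]]|Rab] //.
  by rewrite Rsym.
by exists a, b.
Qed.

Definition nbhd (V : finType) (G : rel V) (v : V) : {set V} := [set u | G v u].

Section Copies.
Variables (W V : finType) (H : rel W) (G : rel V).

Definition copy_of (f : W -> V) : {set V} * {set {set V}} :=
  (f @: setT, [set f @: e | e : {set W} in edges H]).

Lemma copy_of_is_copy f : symmetric H -> symmetric G -> injective f ->
  (forall a b, H a b -> G (f a) (f b)) -> is_subgraph G (copy_of f) && iso_to H (copy_of f).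
Proof.
move=> Hsym Gsym f_inj f_hom; apply/andP; split; [apply/andP; split|].
- apply/subsetP=> _ /imsetP[_ /edgesP[a [b [Hab ->]]] ->].
  by rewrite imset_set2 mem_set2_edges // f_hom.
- apply/forallP=> X; apply/implyP=> /imsetP[e _ ->].
  by apply: imsetS; apply: subsetT.
- apply/existsP; exists [ffun a => f a]; rewrite (eq_imset _ (ffunE f)) eqxx andbT.
  apply/andP; split; first by apply/injectiveP=> a b; rewrite !ffunE => /f_inj.
  apply/forallP=> a; apply/forallP=> b; rewrite !ffunE -imset_set2.
  by rewrite (mem_imset _ _ (imset_inj f_inj)) mem_set2_edges.
Qed.

Lemma copy_is_copy_of p : symmetric G -> is_subgraph G p -> iso_to H p ->
  exists f : W -> V,
    [/\ injective f, forall a b, H a b -> G (f a) (f b) & p = copy_of f].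
Proof.
case: p => S E Gsym /andP[/subsetP E_edges /forallP E_S].
case/existsP=> f /andP[/andP[/injectiveP f_inj /eqP/= f_onto] /forallP/= f_iso].
have iso_ab a b : H a b = ([set f a; f b] \in E) by apply/eqP/(forallP (f_iso a)).
have f_hom a b : H a b -> G (f a) (f b).
  by rewrite iso_ab => /E_edges; rewrite mem_set2_edges.
exists f; split=> //; congr pair => //=; apply/setP=> X; apply/idP/imsetP=> [XE|].
  have /edgesP[x [y [_ eX]]] := E_edges X XE.
  have /subsetP XS := implyP (E_S X) XE.
  have /imsetP[a _ xa] : x \in f @: setT by rewrite f_onto XS // eX set21.
  have /imsetP[b _ yb] : y \in f @: setT by rewrite f_onto XS // eX set22.
  subst x y; exists [set a; b]; last by rewrite eX imset_set2.
  by apply/edgesP; exists a, b; rewrite iso_ab -eX.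
case=> _ /edgesP[a [b [Hab ->]]] ->.
by rewrite imset_set2 -iso_ab.
Qed.

Lemma Ncount_gt0 f : symmetric H -> symmetric G -> injective f ->
  (forall a b, H a b -> G (f a) (f b)) -> 0 < Ncount H G.
Proof.
move=> Hsym Gsym f_inj f_hom; rewrite /Ncount card_gt0; apply/set0Pn.
by exists (copy_of f); rewrite inE copy_of_is_copy.
Qed.

Lemma colorable_of_copy k : symmetric G -> 0 < Ncount H G -> colorable G k -> colorable H k.
Proof.
move=> Gsym; rewrite card_gt0 => /set0Pn[p /[!inE] /andP[p_sub p_iso]].
have [f [_ f_hom _]] := copy_is_copy_of Gsym p_sub p_iso.
case/existsP=> col /forallP proper_col; apply/existsP; exists [ffun a => col (f a)].
apply/forallP=> a; apply/forallP=> b; apply/implyP=> /f_hom Gfab; rewrite !ffunE.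
exact: (implyP (forallP (proper_col (f a)) (f b))).
Qed.

End Copies.

Lemma Ncount_ext (W V : finType) (H : rel W) (G1 G2 : rel V) :
  G1 =2 G2 -> Ncount H G1 = Ncount H G2.
Proof.
move=> eqG; rewrite /Ncount /is_subgraph; suff -> : edges G1 = edges G2 by [].
by apply/setP=> e; apply/edgesP/edgesP=> -[a [b [Gab ->]]]; exists a, b; rewrite ?eqG // -eqG.
Qed.

Definition p3_l : 'I_3 := @Ordinal 3 0 isT.
Definition p3_mid : 'I_3 := @Ordinal 3 1 isT.
Definition p3_r : 'I_3 := @Ordinal 3 2 isT.

Lemma P3_vertexP (i : 'I_3) : [\/ i = p3_l, i = p3_mid | i = p3_r].
Proof. by case: i => -[|[|[|//]]] ?; [apply: Or31 | apply: Or32 | apply: Or33]; apply: val_inj. Qed.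

Lemma P3_sym : symmetric P3.
Proof. by move=> i j; rewrite /P3 orbC. Qed.

Lemma setT_P3 : [set: 'I_3] = p3_mid |: [set p3_l; p3_r].
Proof. by apply/setP=> i; rewrite !inE; case: (P3_vertexP i) => ->. Qed.

Lemma edges_P3 : edges P3 = [set [set p3_mid; p3_l]; [set p3_mid; p3_r]].
Proof.
apply/setP=> e; rewrite in_set2; apply/edgesP/orP => [[i [j []]]|[]/eqP->].
- by case: (P3_vertexP i) => ->; case: (P3_vertexP j) => -> // _ ->;
    [left | left | right | right]; rewrite // [X in X == _]setUC.
- by exists p3_mid, p3_l.
- by exists p3_mid, p3_r.
Qed.

Section Cherries.
Variables (V : finType) (G : rel V).
Hypotheses (Gsym : symmetric G) (Girr : irreflexive G).

Definition cherries : {set V * {set V}} :=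
  [set q : V * {set V} | (q.2 \subset nbhd G q.1) && (#|q.2| == 2)].

Definition cherry_copy (q : V * {set V}) : {set V} * {set {set V}} :=
  (q.1 |: q.2, [set [set q.1; c] | c in q.2]).

Lemma card_cherries : #|cherries| = \sum_v 'C(#|nbhd G v|, 2).
Proof.
rewrite -sum1_card; under [RHS]eq_bigr => v _ do rewrite -cards_draws -sum1_card.
by rewrite pair_big_dep /=; apply: eq_bigl => q; rewrite !inE.
Qed.

Lemma cherry_copy_inj : {in cherries &, injective cherry_copy}.
Proof.
move=> [v A] [v' A']; rewrite !inE /= => /andP[sA /cards2P[a [b [ab eA]]]]
  /andP[sA' _] [eS eE].
have vA : v \notin A by apply/negP => /(subsetP sA); rewrite inE Girr.
have v'A' : v' \notin A' by apply/negP => /(subsetP sA'); rewrite inE Girr.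
suff evv' : v = v'.
  by subst v'; congr pair; rewrite -(setU1K vA) -(setU1K v'A') eS.
apply/eqP; apply: contraT => vv'.
have v'_in c : c \in A -> v' \in [set v; c].
  move=> cA; have : [set v; c] \in [set [set v'; c0] | c0 in A'] by rewrite -eE; apply: imset_f.
  by case/imsetP => c0 _ ->; rewrite set21.
move: (v'_in a) (v'_in b); rewrite eA set21 set22 !in_set2 eq_sym (negbTE vv').
by move=> /(_ isT)/eqP av' /(_ isT)/eqP bv'; rewrite -av' -bv' eqxx in ab.
Qed.

Lemma copy_of_P3 (f : 'I_3 -> V) :
  copy_of P3 f = cherry_copy (f p3_mid, [set f p3_l; f p3_r]).
Proof. by rewrite /copy_of /cherry_copy /= setT_P3 edges_P3 !(imsetU1, imset_set1). Qed.

Lemma P3_copies :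
  [set p | is_subgraph G p && iso_to P3 p] = cherry_copy @: cherries.
Proof.
apply/setP=> p; rewrite inE; apply/andP/imsetP => [[p_sub p_iso]|[[v A]]].
  have [f [f_inj f_hom ->]] := copy_is_copy_of Gsym p_sub p_iso.
  exists (f p3_mid, [set f p3_l; f p3_r]); last exact: copy_of_P3.
  rewrite inE cards2 (inj_eq f_inj) /=; apply/andP; split=> //.
  by apply/subsetP => x /set2P[]->; rewrite inE f_hom.
rewrite inE /= => /andP[sA /cards2P[a [b [ab eA]]]] ->; subst A.
have [Gva Gvb] : G v a /\ G v b.
  by move: (subsetP sA a (set21 a b)) (subsetP sA b (set22 a b)); rewrite !inE.
have [va vb] : v != a /\ v != b.
  by split; [move: Gva | move: Gvb]; apply: contraTneq => <-; rewrite Girr.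
pose f (i : 'I_3) := nth v [:: a; v; b] i.
have f_inj : injective f.
  move=> i j; case: (P3_vertexP i) => ->; case: (P3_vertexP j) => -> //;
    by rewrite /f /= => e; move: va vb ab; rewrite e eqxx.
have f_hom i j : P3 i j -> G (f i) (f j).
  by case: (P3_vertexP i) => ->; case: (P3_vertexP j) => -> //= _; rewrite /f //= Gsym.
by rewrite -(copy_of_P3 f); apply/andP/copy_of_is_copy; first exact: P3_sym.
Qed.

Lemma Ncount_P3 : Ncount P3 G = \sum_v 'C(#|nbhd G v|, 2).
Proof.
by rewrite /Ncount P3_copies (card_in_imset cherry_copy_inj) card_cherries.
Qed.

End Cherries.

Lemma critical_edge_bipartition (U : finType) (F : rel U) x y :
  irreflexive F -> chromatic_number F = 3 -> color_critical_edge F x y ->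
  exists c : U -> bool, c x = c y /\ forall a b, F a b -> c a = c b -> [set a; b] = [set x; y].
Proof.
move=> Firr chiF [Fxy]; rewrite chiF => chi_del.
have /colorable2P[c proper_c] : colorable (delete_edge F x y) 2.
  apply: colorable_widen (colorable_chromatic_number _); first by rewrite -ltnS.
  by move=> a; rewrite /delete_edge Firr.
have c_edge a b : F a b -> c a = c b -> [set a; b] = [set x; y].
  move=> Fab cab; apply/eqP; apply: contraT => ne.
  by have := proper_c a b; rewrite /delete_edge Fab ne cab eqxx => /(_ isT).
exists c; split=> //; apply/eqP; apply: contraT => cxy.
suff /chromatic_number_min : colorable F 2 by rewrite chiF.
apply/colorable2P; exists c => a b Fab; apply/negP => /eqP cab.
by case/eq_set2: (c_edge a b Fab cab) => -[? ?]; subst a b; rewrite cab eqxx in cxy.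
Qed.

Lemma exists_inj_into (T T' : finType) (A : {set T}) (B : {set T'}) (b0 : T') :
  #|A| <= #|B| -> exists f : T -> T', {in A &, injective f} /\ {in A, forall a, f a \in B}.
Proof.
move=> le_AB; have idx_lt a : a \in A -> index a (enum A) < size (enum B).
  by move=> aA; rewrite -cardE (leq_trans _ le_AB) // cardE index_mem mem_enum.
exists (fun a => nth b0 (enum B) (index a (enum A))); split=> [a a' aA a'A /eqP|a aA].
  rewrite nth_uniq ?idx_lt ?enum_uniq // => /eqP/(congr1 (nth a (enum A))).
  by rewrite !nth_index ?mem_enum.
by rewrite -mem_enum mem_nth ?idx_lt.
Qed.

Lemma if_inj (T T' : Type) (P : pred T) (f g : T -> T') :
  injective f -> injective g -> (forall a b, f a <> g b) ->
  injective (fun z => if P z then f z else g z).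
Proof.
move=> f_inj g_inj fg a b; case: (P a); case: (P b) => e.
- exact: f_inj.
- by case: (fg _ _ e).
- by case: (fg _ _ (esym e)).
- exact: g_inj.
Qed.

Section Embedding.
Variables (U V : finType) (F : rel U) (G : rel V).
Hypotheses (Fsym : symmetric F) (Gsym : symmetric G) (Girr : irreflexive G).
Variables (x y : U) (c : U -> bool).
Hypotheses (xy : x != y) (cxy : c x = c y).
Hypothesis c_edge : forall a b, F a b -> c a = c b -> [set a; b] = [set x; y].
Variables (u v : V) (Z B : {set V}).
Hypotheses (Guv : G u v) (B_uv : B \subset nbhd G u :&: nbhd G v).
Hypotheses (uZ : u \notin Z) (vZ : v \notin Z) (Z_B : {in Z, forall z, B \subset nbhd G z}).
Hypotheses (U_B : #|U| <= #|B|) (U_Z : #|U| <= #|Z| + 2).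

Lemma complete_to_B w b : w \in u |: (v |: Z) -> b \in B -> G w b.
Proof.
move=> w_top bB; have /[!inE] /andP[Gub Gvb] := subsetP B_uv b bB.
by case/setU1P: w_top => [->|/setU1P[->|/Z_B/subsetP/(_ b bB)]] //; rewrite inE.
Qed.

Lemma exists_inj_top : exists top : U -> V,
  [/\ injective top, top x = u, top y = v & forall z, top z \in u |: (v |: Z)].
Proof.
have uv : u != v by apply: contraTneq Guv => ->; rewrite Girr.
have le_Z : #|~: [set x; y]| <= #|Z| by have := cardsC [set x; y]; rewrite cards2 xy; lia.
have [fZ [fZ_inj fZ_Z]] := exists_inj_into u le_Z.
pose top z := if z == x then u else if z == y then v else fZ z.
have top_x : top x = u by rewrite /top eqxx.
have top_y : top y = v by rewrite /top eq_sym (negbTE xy) eqxx.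
have top_other z : z != x -> z != y -> top z \in Z.
  by move=> zx zy; rewrite /top (negbTE zx) (negbTE zy) fZ_Z // !inE negb_or zx.
have top_eq_u z : (top z == u) = (z == x).
  have [->|zx] := eqVneq z x; first by rewrite top_x eqxx.
  have [->|zy] := eqVneq z y; first by rewrite top_y eq_sym (negbTE uv).
  by apply: contraNF uZ => /eqP <-; apply: top_other.
have top_eq_v z : (top z == v) = (z == y).
  have [->|zy] := eqVneq z y; first by rewrite top_y eqxx.
  have [->|zx] := eqVneq z x; first by rewrite top_x (negbTE uv).
  by apply: contraNF vZ => /eqP <-; apply: top_other.
exists top; split=> // [a b|z]; last first.
  rewrite !inE top_eq_u top_eq_v.
  by case: eqVneq => //= zx; case: eqVneq => //= zy; apply: top_other.
have [->|ax] := eqVneq a x; first by rewrite top_x => /esym/eqP; rewrite top_eq_u => /eqP->.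
have [->|ay] := eqVneq a y; first by rewrite top_y => /esym/eqP; rewrite top_eq_v => /eqP->.
move=> eab; have bx : b != x by rewrite -top_eq_u -eab top_eq_u.
have b_y : b != y by rewrite -top_eq_v -eab top_eq_v.
move: eab; rewrite /top (negbTE ax) (negbTE ay) (negbTE bx) (negbTE b_y).
by apply: fZ_inj; rewrite !inE negb_or ?ax ?ay ?bx ?b_y.
Qed.

Lemma embedding : 0 < Ncount F G.
Proof.
have [top [top_inj top_x top_y top_mem]] := exists_inj_top.
have le_B : #|[set: U]| <= #|B| by rewrite cardsT.
have [fB [fB_inj fB_B]] := exists_inj_into u le_B.
have top_fB a b : G (top a) (fB b) by apply: complete_to_B (fB_B _ (in_setT b)).
pose phi z := if c z == c x then top z else fB z.
have phi_inj : injective phi.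
  apply: if_inj => // [a b|a b ab]; first exact: fB_inj (in_setT a) (in_setT b).
  by have := top_fB a b; rewrite ab Girr.
have phi_hom a b : F a b -> G (phi a) (phi b).
  move=> Fab; rewrite /phi; case: eqVneq => ca; case: eqVneq => cb.
  - by case/eq_set2: (c_edge Fab (etrans ca (esym cb))) => -[-> ->];
      rewrite top_x top_y // Gsym.
  - exact: top_fB.
  - by rewrite Gsym top_fB.
  - have cab : c a = c b by move: ca cb; case: (c a); case: (c b); case: (c x).
    by case/eq_set2: (c_edge Fab cab) => -[ax _]; rewrite ax ?cxy eqxx in ca.
exact: Ncount_gt0 phi_inj phi_hom.
Qed.

End Embedding.

Definition p3_turan2 (m : nat) : nat := m./2 * 'C(m - m./2, 2) + (m - m./2) * 'C(m./2, 2).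

Lemma bin2_mul2 n : 'C(n, 2) * 2 + n = n * n.
Proof. by elim: n => [//|n IHn]; rewrite binS bin1; lia. Qed.

Lemma half_split m : exists k r, m = k + k + r /\ r <= 1.
Proof. by exists m./2, (odd m); have := odd_double_half m; rewrite -addnn leq_b1; lia. Qed.

Lemma p3_turan2_double k r : r <= 1 ->
  p3_turan2 (k + k + r) * 2 + 2 * k * (k + r) = k * (k + r) * (k + k + r).
Proof.
move=> r_le1; have half_m : (k + k + r)./2 = k.
  case: r r_le1 => [|[|//]] _; first by rewrite addn0 addnn half_double.
  by rewrite addn1 addnn /= uphalf_double.
rewrite /p3_turan2 half_m (_ : k + k + r - k = k + r); last by lia.
have := congr1 (muln k) (bin2_mul2 (k + r)); have := congr1 (muln (k + r)) (bin2_mul2 k).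
lia.
Qed.

Lemma leq_mul_balanced x y k r : r <= 1 -> x + y = k + k + r -> x * y <= k * (k + r).
Proof.
move=> r_le1; wlog le_xk : x y / x <= k => [hyp sum_xy|].
  by case: (leqP x k) => [le_xk | lt_kx]; [apply: hyp | rewrite mulnC; apply: hyp]; lia.
move=> sum_xy; have [a k_xa] : exists a, k = x + a by exists (k - x); lia.
have y_xar : y = x + a + a + r by lia.
by subst; nia.
Qed.

Lemma p3_turan2_max m x : x <= m -> (m - x) * 'C(x, 2) + x * 'C(m - x, 2) <= p3_turan2 m.
Proof.
move=> le_xm; rewrite -(leq_pmul2r (isT : 0 < 2)).
have [k [r [m_kr r_le1]]] := half_split m; subst m; have := p3_turan2_double k r_le1.
have := @leq_mul_balanced x (k + k + r - x) k r r_le1 ltac:(lia).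
have := congr1 (muln (k + k + r - x)) (bin2_mul2 x).
have := congr1 (muln x) (bin2_mul2 (k + k + r - x)).
case: (leqP 2 (k + k + r)) => [le2m|lt_m2]; first nia.
by rewrite !(@bin_small _ 2) ?muln0; lia.
Qed.

Lemma p3_turan2_leS m : p3_turan2 m <= p3_turan2 m.+1.
Proof.
have [k [r [-> r_le1]]] := half_split m; rewrite -(leq_pmul2r (isT : 0 < 2)).
case: r r_le1 => [|[|//]] _.
- have := p3_turan2_double k (isT : 0 <= 1); have := p3_turan2_double k (isT : 1 <= 1).
  rewrite !addn0 -[(k + k).+1]addn1; nia.
- have := p3_turan2_double k (isT : 1 <= 1); have := p3_turan2_double k.+1 (isT : 0 <= 1).
  rewrite addn0 (_ : (k + k + 1).+1 = k.+1 + k.+1); last by lia.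
  nia.
Qed.

Lemma p3_turan2_step_mindeg m d :
  100 <= m -> p3_turan2 m <= p3_turan2 m.-1 + 'C(d, 2) + d * m -> m <= 4 * d.
Proof.
move=> m_ge100 le_step; rewrite leqNgt; apply/negP => lt_4d.
have := bin2_mul2 d; have [k [r [m_kr r_le1]]] := half_split m; subst m.
case: r r_le1 m_ge100 lt_4d le_step => [|[|//]] _.
- case: k => [//|k]; rewrite addn0 (_ : (k.+1 + k.+1).-1 = k + k + 1); last by lia.
  have := p3_turan2_double k (isT : 1 <= 1); have := p3_turan2_double k.+1 (isT : 0 <= 1).
  rewrite addn0; nia.
- rewrite (_ : (k + k + 1).-1 = k + k + 0); last by lia.
  have := p3_turan2_double k (isT : 1 <= 1); have := p3_turan2_double k (isT : 0 <= 1).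
  nia.
Qed.

Section Extremal.
Variables (V : finType) (G : rel V).
Hypothesis Gsym : symmetric G.

Definition deg_in (S : {set V}) (w : V) : nat := #|S :&: nbhd G w|.

Definition p3_in (S : {set V}) : nat := \sum_(w in S) 'C(deg_in S w, 2).

Lemma card_setI_nbhd (A : {set V}) z : #|A :&: nbhd G z| = \sum_(b in A) G z b.
Proof.
rewrite -sum1_card big_mkcond [RHS]big_mkcond /=; apply: eq_bigr => b _.
by rewrite !inE; case: (b \in A); case: (G z b).
Qed.

Lemma sum_card_setI_nbhd (T C : {set V}) :
  \sum_(z in T) #|C :&: nbhd G z| = \sum_(b in C) #|T :&: nbhd G b|.
Proof.
under eq_bigr => z _ do rewrite card_setI_nbhd.
rewrite exchange_big /=; apply: eq_bigr => b _; rewrite card_setI_nbhd.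
by apply: eq_bigr => z _; rewrite Gsym.
Qed.

Lemma exists_heavy_vertex (S C Ex : {set V}) :
  C \subset S -> {in C, forall b, #|S| <= 4 * deg_in S b} -> 0 < #|C| ->
  20 * (#|Ex| + 1) <= #|S| ->
  exists2 z, z \in S :\: Ex & #|C| <= 5 * #|C :&: nbhd G z|.
Proof.
move=> CS C_deg C_gt0 S_large; set T := S :\: Ex.
have sum_lb : #|C| * #|S| <= 4 * \sum_(z in T) #|C :&: nbhd G z| + 4 * (#|C| * #|Ex|).
  suff : \sum_(b in C) #|S| <= \sum_(b in C) (4 * #|T :&: nbhd G b| + 4 * #|Ex|).
    by rewrite sum_card_setI_nbhd sum_nat_const big_split /= sum_nat_const -big_distrr /=; lia.
  apply: leq_sum => b bC; apply: leq_trans (C_deg b bC) _.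
  rewrite -mulnDr leq_mul2l /deg_in; apply/orP; right.
  have : S :&: nbhd G b \subset (T :&: nbhd G b) :|: Ex.
    by apply/subsetP => w; rewrite !inE; case: (w \in Ex); rewrite ?orbT ?orbF.
  by move/subset_leq_card; rewrite cardsU; lia.
apply/exists_inP; apply: contraT; rewrite negb_exists_in => /forall_inP light.
have : \sum_(z in T) (5 * #|C :&: nbhd G z| + 1) <= \sum_(z in T) #|C|.
  by apply: leq_sum => z zT; have := light z zT; rewrite -ltnNge addn1.
rewrite sum_nat_const big_split /= sum_nat_const -big_distrr /=.
have : #|T| <= #|S| by apply/subset_leq_card/subsetDl.
have : #|C| * (20 * (#|Ex| + 1)) <= #|C| * #|S| by rewrite leq_mul2l S_large orbT.
nia.
Qed.

Lemma p3_in_delete (S : {set V}) v : v \in S ->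
  p3_in S <= p3_in (S :\ v) + 'C(deg_in S v, 2) + deg_in S v * #|S|.
Proof.
move=> vS; rewrite /p3_in (big_setD1 v vS) /=.
have deg_del w : w \in S :\ v -> deg_in S w = G w v + deg_in (S :\ v) w.
  move=> /setD1P[wv _]; rewrite /deg_in (cardsD1 v (S :&: nbhd G w)) !inE vS /=.
  by rewrite setIDAC.
have : \sum_(w in S :\ v) 'C(deg_in S w, 2) <=
       \sum_(w in S :\ v) ('C(deg_in (S :\ v) w, 2) + G v w * #|S|).
  apply: leq_sum => w wSv; rewrite deg_del // Gsym.
  case: (G v w); last by rewrite add0n mul0n addn0.
  rewrite add1n binS bin1 mul1n leq_add2l /deg_in; apply: subset_leq_card.
  exact: subset_trans (subsetIl _ _) (subsetDl _ _).
rewrite big_split /= -big_distrl /= -card_setI_nbhd.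
have : #|(S :\ v) :&: nbhd G v| <= deg_in S v by apply/subset_leq_card/setSI/subD1set.
move=> /leq_mul/(_ (leqnn #|S|)); lia.
Qed.

Variable t : nat.
Hypothesis t_gt0 : 0 < t.

(* Each greedy step keeps a fifth of the candidates in C, by [exists_heavy_vertex]. *)
Lemma exists_common_nbhd j (S C Ex : {set V}) :
  C \subset S -> {in C, forall b, #|S| <= 4 * deg_in S b} ->
  t * 5 ^ j <= #|C| -> 20 * (#|Ex| + j) <= #|S| ->
  exists Z : {set V}, [/\ Z \subset S :\: Ex, #|Z| = j &
    t <= #|[set b in C | Z \subset nbhd G b]|].
Proof.
elim: j C Ex => [|j IHj] C Ex CS C_deg C_large S_large.
  exists set0; rewrite sub0set cards0; split=> //.
  rewrite (_ : [set b in C | _] = C); last by apply/setP => b; rewrite inE sub0set andbT.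
  by rewrite expn0 muln1 in C_large.
have C_gt0 : 0 < #|C| by apply: leq_trans C_large; rewrite muln_gt0 t_gt0 expn_gt0.
have [|z zSEx C_z] := exists_heavy_vertex CS C_deg C_gt0 (Ex := Ex).
  by move: S_large; clear; lia.
have /setDP[zS zEx] := zSEx.
have Cz_S : C :&: nbhd G z \subset S by apply: subset_trans (subsetIl _ _) CS.
have Cz_deg : {in C :&: nbhd G z, forall b, #|S| <= 4 * deg_in S b}.
  by move=> b /setIP[bC _]; apply: C_deg.
have Cz_large : t * 5 ^ j <= #|C :&: nbhd G z|.
  by rewrite -(leq_pmul2l (isT : 0 < 5)); apply: leq_trans C_z; rewrite mulnCA -expnS.
have S_large' : 20 * (#|z |: Ex| + j) <= #|S|.
  by rewrite cardsU1 zEx; move: S_large; clear; lia.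
have [Z [ZSEx cardZ Z_common]] := IHj _ _ Cz_S Cz_deg Cz_large S_large'.
have zZ : z \notin Z by apply: contraTN ZSEx => zZ; apply/subsetPn; exists z; rewrite // !inE eqxx.
exists (z |: Z); split.
- by rewrite subUset sub1set zSEx (subset_trans ZSEx) // setDS // subsetUr.
- by rewrite cardsU1 zZ cardZ.
apply: leq_trans Z_common (subset_leq_card _); apply/subsetP => b /[!inE].
by case/andP=> /andP[bC Gzb] Z_b; rewrite bC subUset Z_b sub1set inE Gsym Gzb.
Qed.

(* The configuration of [embedding] for t = |F|, which an F-free graph avoids. *)
Hypothesis no_config : forall u v (Z B : {set V}),
  G u v -> B \subset nbhd G u :&: nbhd G v -> u \notin Z -> v \notin Z ->
  {in Z, forall z, B \subset nbhd G z} -> t <= #|B| -> t <= #|Z| + 2 -> False.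

Lemma codegree_lt (S : {set V}) u v :
  {in S, forall b, #|S| <= 4 * deg_in S b} -> 20 * (t + 2) <= #|S| -> G u v ->
  #|S :&: nbhd G u :&: nbhd G v| < t * 5 ^ (t - 2).
Proof.
move=> S_deg S_large Guv; rewrite ltnNge; apply/negP => C_large.
set C := S :&: nbhd G u :&: nbhd G v in C_large.
have CS : C \subset S by rewrite /C -setIA subsetIl.
have C_deg : {in C, forall b, #|S| <= 4 * deg_in S b} by move=> b /(subsetP CS); apply: S_deg.
have S_large' : 20 * (#|[set u; v]| + (t - 2)) <= #|S|.
  by have := cards2 u v; case: (u != v) => /= ->; lia.
have [Z [/subsetP ZS cardZ B_large]] := exists_common_nbhd CS C_deg C_large S_large'.
apply: (no_config Guv _ _ _ _ B_large).
- by apply/subsetP => b; rewrite !inE => /andP[/andP[/andP[_ ->] ->] _].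
- by apply/negP => /ZS; rewrite !inE eqxx.
- by apply/negP => /ZS; rewrite !inE eqxx orbT.
- move=> z zZ; apply/subsetP => b; rewrite !inE => /andP[_ /subsetP/(_ z zZ)].
  by rewrite inE Gsym.
- by rewrite cardZ; lia.
Qed.

Definition codeg_max : nat := t * 5 ^ t.
(* 20 (t + 2) feeds [codegree_lt], 100 is needed by [p3_turan2_step_mindeg] and
   12 codeg_max absorbs the codegree errors in [deg_in_nbhd_le]. *)
Definition stable_size : nat := 100 + 12 * codeg_max + 20 * (t + 2).

Section MinDegree.
Variable S : {set V}.
Hypotheses (S_large : stable_size <= #|S|) (S_mindeg : {in S, forall w, #|S| <= 4 * deg_in S w}).

Lemma codegree_lt_max u v : G u v -> #|S :&: nbhd G u :&: nbhd G v| < codeg_max.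
Proof.
move=> Guv; apply: leq_trans (codegree_lt S_mindeg _ Guv) _.
  by move: S_large; rewrite /stable_size; lia.
by rewrite leq_mul2l leq_exp2l ?leq_subr ?orbT.
Qed.

(* If y has a neighbour y' in N(w), then y and y' each have about |S|/4 neighbours
   outside N(w) but share fewer than codeg_max of them. *)
Lemma deg_in_nbhd_le w y : {in S, forall z, deg_in S z <= deg_in S w} ->
  y \in S :&: nbhd G w -> deg_in S y <= #|S :\: nbhd G w|.
Proof.
move=> w_max /setIP[yS]; rewrite inE => Gwy.
set X := S :\: nbhd G w; set Ny := (S :&: nbhd G y) :\: nbhd G w.
have deg_y : deg_in S y = #|S :&: nbhd G y :&: nbhd G w| + #|Ny| by rewrite cardsID.
have codeg_yw : #|S :&: nbhd G y :&: nbhd G w| < codeg_max.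
  by rewrite setIAC codegree_lt_max.
have Ny_X : Ny \subset X by apply/setSD/subsetIl.
have [Nyw0|/set0Pn[y' /setIP[/setIP[y'S Gyy'] Gwy']]] :=
  eqVneq (S :&: nbhd G y :&: nbhd G w) set0.
  by rewrite deg_y Nyw0 cards0 add0n; apply: subset_leq_card.
rewrite !inE in Gyy' Gwy'; set Ny' := (S :&: nbhd G y') :\: nbhd G w.
have deg_y' : deg_in S y' = #|S :&: nbhd G y' :&: nbhd G w| + #|Ny'| by rewrite cardsID.
have codeg_y'w : #|S :&: nbhd G y' :&: nbhd G w| < codeg_max.
  by rewrite setIAC codegree_lt_max.
have Ny'_X : Ny' \subset X by apply/setSD/subsetIl.
have union_X : #|Ny :|: Ny'| <= #|X| by rewrite subset_leq_card // subUset Ny_X.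
have inter_small : #|Ny :&: Ny'| < codeg_max.
  apply: leq_ltn_trans (codegree_lt_max Gyy'); apply/subset_leq_card/subsetP => z.
  by rewrite !inE => /andP[/andP[_ /andP[-> ->]] /andP[_ /andP[_ ->]]].
have := cardsUI Ny Ny'; have := S_mindeg y'S; have := S_mindeg yS.
move: S_large; rewrite /stable_size; lia.
Qed.

Lemma p3_in_le_turan2_mindeg : p3_in S <= p3_turan2 #|S|.
Proof.
have [w0 w0S] : exists w0, w0 \in S.
  by apply/set0Pn; rewrite -card_gt0; move: S_large; rewrite /stable_size; lia.
have [w wS w_max] : exists2 w, w \in S & {in S, forall z, deg_in S z <= deg_in S w}.
  by case: (arg_maxnP (deg_in S) w0S) => w; exists w.
set Y := S :&: nbhd G w; set X := S :\: nbhd G w.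
have card_YX : #|Y| + #|X| = #|S| by rewrite cardsID.
have sum_Y : \sum_(y in Y) 'C(deg_in S y, 2) <= #|Y| * 'C(#|X|, 2).
  rewrite -sum_nat_const; apply: leq_sum => y yY.
  exact/leq_bin2l/(deg_in_nbhd_le w_max yY).
have sum_X : \sum_(z in X) 'C(deg_in S z, 2) <= #|X| * 'C(#|Y|, 2).
  rewrite -sum_nat_const; apply: leq_sum => z /setDP[zS _].
  exact/leq_bin2l/w_max.
rewrite /p3_in (big_setID (nbhd G w)) /= -/X -/Y.
have := p3_turan2_max (leq_addr #|X| #|Y|); rewrite card_YX (_ : #|S| - #|Y| = #|X|); lia.
Qed.

End MinDegree.

Definition stable (S : {set V}) : bool :=
  [forall w in S, p3_in (S :\ w) + (p3_turan2 #|S| - p3_turan2 #|S|.-1) <= p3_in S].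

Lemma stable_mindeg (S : {set V}) :
  stable_size <= #|S| -> stable S -> {in S, forall w, #|S| <= 4 * deg_in S w}.
Proof.
move=> S_large /forall_inP S_stable w wS; apply: p3_turan2_step_mindeg.
  by move: S_large; rewrite /stable_size; lia.
have := S_stable w wS; have := p3_in_delete wS; have := p3_turan2_leS #|S|.-1.
rewrite prednK; last by move: S_large; rewrite /stable_size; lia.
lia.
Qed.

Definition slack : nat := stable_size * 'C(stable_size, 2).

(* Deleting a vertex that witnesses instability raises p3_in S - p3_turan2 #|S| by
   at least one; on stable_size vertices this excess is at most slack. *)
Lemma p3_in_le_progressive j (S : {set V}) :
  #|S| = stable_size + j -> p3_in S <= p3_turan2 (stable_size + j) + (slack - j).
Proof.
elim: j S => [|j IHj] S card_S.
  rewrite addn0 subn0 in card_S *; apply: leq_trans (leq_addl _ _).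
  rewrite /p3_in /slack -card_S -sum_nat_const; apply: leq_sum => w _.
  exact/leq_bin2l/subset_leq_card/subsetIl.
have [S_stable | /forall_inPn[w wS]] := boolP (stable S).
  have S_large : stable_size <= #|S| by rewrite card_S leq_addr.
  rewrite -card_S; apply: leq_trans (leq_addr _ _).
  exact: p3_in_le_turan2_mindeg S_large (stable_mindeg S_large S_stable).
rewrite -ltnNge => unstable_w.
have card_Sw : #|S :\ w| = stable_size + j by rewrite (cardsD1 w S) wS in card_S; lia.
have := IHj _ card_Sw; have := p3_turan2_leS (stable_size + j).
by rewrite card_S addnS /= in unstable_w *; lia.
Qed.

Lemma p3_in_le_turan2 (S : {set V}) : stable_size + slack <= #|S| -> p3_in S <= p3_turan2 #|S|.
Proof.
move=> S_large; have le_S : stable_size <= #|S| := leq_trans (leq_addr _ _) S_large.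
have card_S : #|S| = stable_size + (#|S| - stable_size) by rewrite subnKC.
have := p3_in_le_progressive card_S; rewrite -card_S.
have /eqP-> : slack - (#|S| - stable_size) == 0 by rewrite subn_eq0 leq_subRL.
by rewrite addn0.
Qed.

End Extremal.

Lemma simplebP n (g : {ffun 'I_n * 'I_n -> bool}) :
  reflect (symmetric (Defs.grel g) /\ irreflexive (Defs.grel g)) (simpleb g).
Proof.
apply: (iffP andP) => [[/forallP g_sym /forallP g_irr]|[g_sym g_irr]]; split.
- by move=> a b; apply/eqP/(forallP (g_sym a)).
- by move=> a; apply/negbTE/g_irr.
- by apply/forallP=> a; apply/forallP=> b; rewrite [g (a, b)]g_sym.
- by apply/forallP=> a; rewrite [g (a, a)]g_irr.
Qed.

Lemma Ncount_le_ex n (W U : finType) (H : rel W) (F : rel U) (G : rel 'I_n) :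
  symmetric G -> irreflexive G -> Ncount F G = 0 -> Ncount H G <= ex n H F.
Proof.
move=> Gsym Girr F_free.
have [g eq_G] : exists g : {ffun 'I_n * 'I_n -> bool}, Defs.grel g =2 G.
  by exists [ffun p => G p.1 p.2] => a b; rewrite /Defs.grel ffunE.
rewrite -(Ncount_ext H eq_G) /ex; apply: leq_bigmax_cond.
rewrite (Ncount_ext F eq_G) F_free eqxx andbT.
by apply/simplebP; split=> [a b|a]; rewrite !eq_G; [apply: Gsym | apply: Girr].
Qed.

Lemma turan2_sym n : symmetric (turan2 n).
Proof. by move=> a b; rewrite /turan2 eq_sym. Qed.

Lemma turan2_irr n : irreflexive (turan2 n).
Proof. by move=> a; rewrite /turan2 eqxx. Qed.

Lemma colorable_turan2 n : colorable (turan2 n) 2.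
Proof. by apply/colorable2P; exists (fun i : 'I_n => i < n./2). Qed.

Lemma card_ord_lt n h : h <= n -> #|[set i : 'I_n | i < h]| = h.
Proof.
move=> le_hn; rewrite -sum1dep_card -(big_ord_widen n (fun _ => 1) le_hn) /=.
by rewrite sum_nat_const card_ord muln1.
Qed.

Lemma sum_nat_cond_const (T : finType) (P : pred T) k :
  \sum_(i | P i) k = #|[set i | P i]| * k.
Proof. by rewrite -sum1dep_card big_distrl /=; apply: eq_bigr => i _; rewrite mul1n. Qed.

Lemma Ncount_P3_turan2 n : Ncount P3 (turan2 n) = p3_turan2 n.
Proof.
rewrite (Ncount_P3 (@turan2_sym n) (@turan2_irr n)); set h := n./2.
have le_hn : h <= n by rewrite leq_half_double -addnn; apply/leqW/leq_addr.
have card_low := card_ord_lt le_hn.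
have card_high : #|[set i : 'I_n | ~~ (i < h)]| = n - h.
  have := cardsC [set i : 'I_n | i < h]; rewrite card_ord card_low.
  rewrite (_ : ~: _ = [set i : 'I_n | ~~ (i < h)]); last by apply/setP => i; rewrite !inE.
  lia.
have deg i : #|nbhd (turan2 n) i| = if i < h then n - h else h.
  case: ifP => hi; [rewrite -card_high | rewrite -card_low];
    by apply: eq_card => j; rewrite !inE /turan2 hi; case: (j < h).
rewrite (eq_bigr _ (fun i _ => congr1 (binomial^~ 2) (deg i))) (bigID (fun i : 'I_n => i < h)) /=.
rewrite (eq_bigr (fun _ => 'C(n - h, 2))); last by move=> i ->.
rewrite [X in _ + X](eq_bigr (fun _ => 'C(h, 2))); last by move=> i /negbTE ->.
by rewrite !sum_nat_cond_const card_low card_high.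
Qed.

Lemma Ncount_P3_le_turan2 (U V : finType) (F : rel U) (G : rel V) x y (c : U -> bool) :
  symmetric F -> symmetric G -> irreflexive G -> x != y -> c x = c y ->
  (forall a b, F a b -> c a = c b -> [set a; b] = [set x; y]) ->
  Ncount F G = 0 -> stable_size #|U| + slack #|U| <= #|V| -> Ncount P3 G <= p3_turan2 #|V|.
Proof.
move=> Fsym Gsym Girr xy cxy c_edge F_free V_large.
have U_gt0 : 0 < #|U| by apply/card_gt0P; exists x.
have no_config u v (Z B : {set V}) : G u v -> B \subset nbhd G u :&: nbhd G v ->
    u \notin Z -> v \notin Z -> {in Z, forall z, B \subset nbhd G z} ->
    #|U| <= #|B| -> #|U| <= #|Z| + 2 -> False.
  move=> Guv B_uv uZ vZ Z_B U_B U_Z.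
  by have := embedding Fsym Gsym Girr xy cxy c_edge Guv B_uv uZ vZ Z_B U_B U_Z; rewrite F_free.
have := p3_in_le_turan2 Gsym U_gt0 no_config (S := setT); rewrite cardsT => /(_ V_large).
apply: leq_trans; rewrite Ncount_P3 //; apply: eq_leq.
by apply: eq_big => [v|v _]; rewrite ?inE // /deg_in setTI.
Qed.

Theorem theorem1p1 (U : finType) (F : rel U) :
  simple_graph F ->
  chromatic_number F = 3 ->
  (exists x y, color_critical_edge F x y) ->
  exists n0, forall n, n0 <= n -> ex n P3 F = Ncount P3 (turan2 n).
Proof.
move=> [Fsym Firr] chiF [x [y crit]].
have [c [cxy c_edge]] := critical_edge_bipartition Firr chiF crit.
have xy : x != y by case: crit => Fxy _; apply: contraTneq Fxy => ->; rewrite Firr.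
have turan2_F_free n : Ncount F (turan2 n) = 0.
  apply/eqP; apply: contraT; rewrite -lt0n => /colorable_of_copy/(_ (colorable_turan2 n)).
  by move=> /(_ (@turan2_sym n))/chromatic_number_min; rewrite chiF.
exists (stable_size #|U| + slack #|U|) => n n_large; apply/eqP; rewrite eqn_leq.
apply/andP; split; last exact: Ncount_le_ex (@turan2_sym n) (@turan2_irr n) (turan2_F_free n).
rewrite Ncount_P3_turan2; apply/bigmax_leqP => g /andP[/simplebP[g_sym g_irr] /eqP g_F_free].
by have := Ncount_P3_le_turan2 Fsym g_sym g_irr xy cxy c_edge g_F_free; rewrite card_ord; apply.
Qed.
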